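(* Let $G=(V=A\cup B,E,w)$ be a simple bipartite graph with weights $w\colon E\to\mathbb{R}_{\ge 0}$, let $b\colon V\to\mathbb{Z}_+$, and let $\varepsilon>0$. Let $F\subseteq E$ be a $b$-matching and let $p\colon B\to\mathbb{R}_{\ge 0}$ be prices such that (i) $F$ is $\varepsilon$-happy with respect to $p$, and (ii) every object $j\in B$ that is unsaturated by $F$ has $p(j)=0$. Then $w(F)\ge(1-\varepsilon)\,w(F^\ast)$, where $F^\ast$ is a $b$-matching of $G$ of maximum weight.
   Context: A $b$-matching is a set $F\subseteq E$ with $\deg_F(v)\le b(v)$ for all $v\in V$, where $\deg_F(v)$ is the number of edges of $F$ incident to $v$; $v$ is saturated by $F$ if $\deg_F(v)=b(v)$ and unsaturated if $\deg_F(v)<b(v)$. For $H\subseteq E$, $w(H)=\sum_{e\in H}w(e)$. Vertices of $A$ are called bidders and vertices of $B$ objects. $N(i)$ is the neighbor set of $i$ in $G$, and $F(i)$ is the set of objects matched to $i$ under $F$. Given prices $p\colon B\to\mathbb{R}_{\ge0}$, for a bidder $i\in A$ define $\pi(i)=\max\{\max_{k\in N(i)\setminus F(i)}\{(1-\varepsilon)w(i,k)-p(k)\},\,0\}$ (the inner max over an empty set is taken as $-\infty$). An edge $(i,j)\in F$ is $\varepsilon$-happy if $w(i,j)-p(j)\ge \pi(i)$. A bidder $i$ is $\varepsilon$-happy if all edges $(i,j)\in F$ are $\varepsilon$-happy and either $i$ is saturated by $F$ (and $\pi(i)\ge 0$), or $i$ is unsaturated by $F$ and $\pi(i)=0$.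 $F$ is $\varepsilon$-happy if every bidder $i\in A$ is $\varepsilon$-happy. *)

From mathcomp Require Import all_boot all_order all_algebra.
Set Implicit Arguments. Unset Strict Implicit. Unset Printing Implicit Defensive.
Import Order.TTheory GRing.Theory Num.Theory.
Local Open Scope ring_scope.

Section Defs.
Variables (R : realFieldType) (A B : finType).

Definition matchedA (F : {set A * B}) (i : A) : {set B} := [set j | (i, j) \in F].
Definition matchedB (F : {set A * B}) (j : B) : {set A} := [set i | (i, j) \in F].

Definition bmatching (E : {set A * B}) (bA : A -> nat) (bB : B -> nat)
  (F : {set A * B}) : Prop :=
  F \subset E /\ (forall i, #|matchedA F i| <= bA i)%N
              /\ (forall j, #|matchedB F j| <= bB j)%N.

Definition weight (w : A -> B -> R) (H : {set A * B}) : R :=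
  \sum_(e in H) w e.1 e.2.

Definition pi_val (E F : {set A * B}) (w : A -> B -> R) (p : B -> R) (eps : R)
  (i : A) : R :=
  \big[Num.max/0]_(k | ((i, k) \in E) && ((i, k) \notin F))
      ((1 - eps) * w i k - p k).

Definition happy_edge (E F : {set A * B}) (w : A -> B -> R) (p : B -> R) (eps : R)
  (i : A) (j : B) : Prop :=
  w i j - p j >= pi_val E F w p eps i.

Definition happy_bidder (E F : {set A * B}) (w : A -> B -> R) (bA : A -> nat)
  (p : B -> R) (eps : R) (i : A) : Prop :=
  (forall j, (i, j) \in F -> happy_edge E F w p eps i j) /\
  ((#|matchedA F i| = bA i /\ 0 <= pi_val E F w p eps i) \/
   ((#|matchedA F i| < bA i)%N /\ pi_val E F w p eps i = 0)).

Definition happy (E F : {set A * B}) (w : A -> B -> R) (bA : A -> nat)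
  (p : B -> R) (eps : R) : Prop := forall i : A, happy_bidder E F w bA p eps i.

End Defs.

From mathcomp Require Import all_boot all_order all_algebra.
From mathcomp Require Import lra.
Set Implicit Arguments. Unset Strict Implicit. Unset Printing Implicit Defensive.
Import Order.TTheory GRing.Theory Num.Theory.
Local Open Scope ring_scope.

(* Put a potential pi(i) + p(j) on every edge (i, j).  On an edge of
   F* outside F it dominates (1 - eps) w(i, j) (definition of pi), on
   an edge of F it is dominated by w(i, j) (happiness).  The total potential of
   F* \ F is at most that of F \ F*: a vertex carrying positive potential is
   saturated by F, so it meets at least as many edges of F \ F* as of F* \ F,
   since F* is a b-matching. *)

Lemma card_setD_le (T : finType) (X Y : {set T}) :
  (#|X| <= #|Y|)%N -> (#|X :\: Y| <= #|Y :\: X|)%N.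
Proof. by rewrite !cardsD setIC => /leq_sub2r. Qed.

Section EdgeSets.
Variables (A B : finType).

Lemma matchedA_setD (X Y : {set A * B}) (i : A) :
  matchedA (X :\: Y) i = matchedA X i :\: matchedA Y i.
Proof. by apply/setP => j; rewrite !inE. Qed.

Lemma matchedB_setD (X Y : {set A * B}) (j : B) :
  matchedB (X :\: Y) j = matchedB X j :\: matchedB Y j.
Proof. by apply/setP => i; rewrite !inE. Qed.

Variable R : realFieldType.

Lemma sum_edges_fst (S : {set A * B}) (g : A -> R) :
  \sum_(e in S) g e.1 = \sum_i g i *+ #|matchedA S i|.
Proof.
rewrite (eq_bigl (fun e => predT e.1 && ((e.1, e.2) \in S))); last by case.
rewrite -(pair_big_dep predT (fun i j => (i, j) \in S) (fun i _ => g i)) /=.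
by apply: eq_bigr => i _; rewrite -sumr_const; apply: eq_bigl => j; rewrite inE.
Qed.

Lemma sum_edges_snd (S : {set A * B}) (g : B -> R) :
  \sum_(e in S) g e.2 = \sum_j g j *+ #|matchedB S j|.
Proof.
have swap_bij : bijective (fun q : B * A => (q.2, q.1)).
  by exists (fun e : A * B => (e.2, e.1)); case.
rewrite (reindex _ (onW_bij _ swap_bij)) /=.
rewrite (eq_bigl (fun q => predT q.1 && ((q.2, q.1) \in S))); last by case.
rewrite -(pair_big_dep predT (fun j i => (i, j) \in S) (fun j _ => g j)) /=.
by apply: eq_bigr => j _; rewrite -sumr_const; apply: eq_bigl => i; rewrite inE.
Qed.

Lemma ler_sum_edges_fst (X Y : {set A * B}) (g : A -> R) :
  (forall i, 0 <= g i) ->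
  (forall i, 0 < g i -> (#|matchedA X i| <= #|matchedA Y i|)%N) ->
  \sum_(e in X) g e.1 <= \sum_(e in Y) g e.1.
Proof.
move=> g_ge0 degXY; rewrite !sum_edges_fst; apply: ler_sum => i _.
have := g_ge0 i; rewrite le0r => /orP[/eqP -> | gi_gt0]; first by rewrite !mul0rn.
by rewrite ler_pMn2l // degXY.
Qed.

Lemma ler_sum_edges_snd (X Y : {set A * B}) (g : B -> R) :
  (forall j, 0 <= g j) ->
  (forall j, 0 < g j -> (#|matchedB X j| <= #|matchedB Y j|)%N) ->
  \sum_(e in X) g e.2 <= \sum_(e in Y) g e.2.
Proof.
move=> g_ge0 degXY; rewrite !sum_edges_snd; apply: ler_sum => j _.
have := g_ge0 j; rewrite le0r => /orP[/eqP -> | gj_gt0]; first by rewrite !mul0rn.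
by rewrite ler_pMn2l // degXY.
Qed.

End EdgeSets.

Section Potential.
Variables (R : realFieldType) (A B : finType) (E F : {set A * B}).
Variables (w : A -> B -> R) (bA : A -> nat) (bB : B -> nat).
Variables (p : B -> R) (eps : R).

Local Notation pi := (pi_val E F w p eps).

Lemma pi_val_ge0 i : 0 <= pi i.
Proof. exact: bigmax_ge_id. Qed.

Lemma le_pi_val i k : (i, k) \in E -> (i, k) \notin F ->
  (1 - eps) * w i k - p k <= pi i.
Proof. by move=> ikE ikF; apply: le_bigmax_cond; rewrite ikE. Qed.

Lemma scaled_weight_le_potential (S : {set A * B}) : S \subset E :\: F ->
  (1 - eps) * weight w S <= \sum_(e in S) (pi e.1 + p e.2).
Proof.
move=> SEF; rewrite /weight mulr_sumr; apply: ler_sum => -[i k] ikS /=.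
have /setDP [ikE ikF] := subsetP SEF _ ikS.
by have := le_pi_val ikE ikF; lra.
Qed.

Lemma happy_pi_val_gt0 {i} : happy_bidder E F w bA p eps i ->
  0 < pi i -> #|matchedA F i| = bA i.
Proof. by case=> _ [[-> //] | [_ ->]]; rewrite ltxx. Qed.

Hypotheses (F_bmatching : bmatching E bA bB F) (happyF : happy E F w bA p eps).
Hypothesis p_unsat : forall j, (#|matchedB F j| < bB j)%N -> p j = 0.
Hypothesis p_ge0 : forall j, 0 <= p j.

Lemma potential_le_weight (S : {set A * B}) : S \subset F ->
  \sum_(e in S) (pi e.1 + p e.2) <= weight w S.
Proof.
move=> SF; apply: ler_sum => -[i j] /(subsetP SF) ijF /=.
by have [/(_ j ijF) happy_ij _] := happyF i; rewrite /happy_edge in happy_ij; lra.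
Qed.

Lemma potential_exchange (Fs : {set A * B}) : bmatching E bA bB Fs ->
  \sum_(e in Fs :\: F) (pi e.1 + p e.2) <= \sum_(e in F :\: Fs) (pi e.1 + p e.2).
Proof.
case: F_bmatching => _ [_ degFB] [_ [degFsA degFsB]].
rewrite !big_split /=; apply: lerD.
  apply: ler_sum_edges_fst => [|i pi_gt0]; first exact: pi_val_ge0.
  rewrite !matchedA_setD card_setD_le // (happy_pi_val_gt0 (happyF i) pi_gt0).
  exact: degFsA.
apply: ler_sum_edges_snd => // j pj_gt0.
have satj : #|matchedB F j| = bB j.
  apply/eqP; rewrite eqn_leq degFB leqNgt.
  by apply: contraTN pj_gt0 => /p_unsat ->; rewrite ltxx.
by rewrite !matchedB_setD card_setD_le // satj degFsB.
Qed.

End Potential.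

Theorem lemma2 (R : realFieldType) (A B : finType) (E : {set A * B})
  (w : A -> B -> R) (bA : A -> nat) (bB : B -> nat) (eps : R)
  (F : {set A * B}) (p : B -> R) (Fstar : {set A * B}) :
  (forall e, e \in E -> 0 <= w e.1 e.2) ->
  (forall i, (0 < bA i)%N) -> (forall j, (0 < bB j)%N) ->
  0 < eps ->
  bmatching E bA bB F ->
  (forall j, 0 <= p j) ->
  happy E F w bA p eps ->
  (forall j, (#|matchedB F j| < bB j)%N -> p j = 0) ->
  bmatching E bA bB Fstar ->
  (forall F', bmatching E bA bB F' -> weight w F' <= weight w Fstar) ->
  weight w F >= (1 - eps) * weight w Fstar.
Proof.
move=> w_ge0 _ _ eps_gt0 F_bm p_ge0 happyF p_unsat Fs_bm _.
have FsE : Fstar \subset E by case: Fs_bm.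
rewrite /weight (big_setID (A := F) Fstar) (big_setID (A := Fstar) F) /= mulrDr setIC.
apply: lerD.
  rewrite mulr_sumr; apply: ler_sum => e /setIP [_ eFs].
  have := w_ge0 e (subsetP FsE e eFs); nra.
apply: le_trans (scaled_weight_le_potential w p eps (setSD F FsE)) _.
apply: le_trans (potential_exchange F_bm happyF p_unsat p_ge0 Fs_bm) _.
exact/potential_le_weight/subsetDl.
Qed.
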